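(* For the complete graph $K_n$ with $n\ge 3$ vertices, $b_{OCD}(K_n)=1$ if $n=3$ and $b_{OCD}(K_n)=\lceil n/2\rceil$ if $n\ge 4$.
   Context: A set $S\subseteq V$ is a dominating set of a graph $G=(V,E)$ if every vertex not in $S$ is adjacent to a vertex of $S$. A set $\tilde D\subseteq V$ is an outer-connected dominating set of $G$ if $\tilde D$ is dominating and the induced subgraph $G[V\setminus\tilde D]$ is connected (the empty graph counts as connected). $\tilde\gamma_c(G)$ is the minimum size of an outer-connected dominating set. For a graph $G$ without isolated vertices, the outer-connected bondage number $b_{OCD}(G)$ is the minimum number of edges whose removal from $G$ yields a graph $G'$ with $\tilde\gamma_c(G')>\tilde\gamma_c(G)$. *)

(* Simple graphs on a finType T given by a symmetric
   irreflexive boolean relation e. *)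
From mathcomp Require Import all_boot.
Set Implicit Arguments. Unset Strict Implicit. Unset Printing Implicit Defensive.

Section Graphs.
Variable T : finType.

Definition dominating (e : rel T) (S : {set T}) : bool :=
  [forall x, (x \notin S) ==> [exists y, (y \in S) && e x y]].

Definition outer_rel (e : rel T) (S : {set T}) : rel T :=
  [rel x y | [&& e x y, x \notin S & y \notin S]].

(* G[V \ S] is connected (vacuously when V \ S is empty). *)
Definition outer_connected (e : rel T) (S : {set T}) : bool :=
  [forall x, forall y, ((x \notin S) && (y \notin S)) ==> connect (outer_rel e S) x y].

Definition ocd (e : rel T) (S : {set T}) : bool :=
  dominating e S && outer_connected e S.

(* outer-connected domination number; setT is always an OCD set,
   so this is the true minimum. *)
Definition ocd_number (e : rel T) : nat :=
  \big[minn/#|T|]_(S : {set T} | ocd e S) #|S|.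

Definition edges (e : rel T) : {set {set T}} :=
  [set [set x; y] | x in T, y in T & e x y].

Definition remove_edges (e : rel T) (F : {set {set T}}) : rel T :=
  [rel x y | e x y && ([set x; y] \notin F)].

Definition ocd_bondage_witness (e : rel T) (F : {set {set T}}) : bool :=
  (F \subset edges e) && (ocd_number e < ocd_number (remove_edges e F)).

(* outer-connected bondage number: minimum number of edges whose removal
   increases ocd_number.  Default (#|edges e|.+1) only if no such set exists. *)
Definition ocd_bondage (e : rel T) : nat :=
  \big[minn/#|edges e|.+1]_(F : {set {set T}} | ocd_bondage_witness e F) #|F|.
End Graphs.

Definition complete_graph (n : nat) : rel 'I_n := [rel x y | x != y].
Arguments complete_graph n : clear implicits.

(* A single vertex v is an outer-connected dominating set of K_n - F as soon
   as v meets no edge of F and K_n - F - v is connected.  The first holds when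
   2|F| < n, and the second when |F| + 3 <= n: two vertices x, y whose edge is
   removed have a common neighbour outside {v, x, y}, since every blocked
   candidate z is charged injectively to an edge xz or zy of F other than xy.
   So removing fewer than ceil(n/2) edges (one edge for n = 3) keeps the
   outer-connected domination number at 1.  Conversely, once every vertex is
   incident to a removed edge no singleton is dominating; a perfect (or
   near-perfect) matching does this with ceil(n/2) edges.  In K_3 - xy the
   singleton {z} still dominates, but leaves x and y disconnected. *)
From mathcomp Require Import all_boot order zify.
Set Implicit Arguments. Unset Strict Implicit. Unset Printing Implicit Defensive.

Lemma bigminn_le_cond (I : finType) (P : pred I) (F : I -> nat) d j :
  P j -> \big[minn/d]_(i | P i) F i <= F j.
Proof. by rewrite -minEnat -leEnat; apply: Order.TotalTheory.bigmin_le_cond. Qed.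

Lemma leq_bigminn (I : finType) (P : pred I) (F : I -> nat) d m :
  m <= d -> (forall i, P i -> m <= F i) -> m <= \big[minn/d]_(i | P i) F i.
Proof. by rewrite -minEnat -!leEnat; apply: Order.POrderTheory.le_bigmin. Qed.

Section OuterConnectedDomination.
Variable T : finType.
Implicit Types (e f : rel T) (S : {set T}) (F : {set {set T}}).

Lemma dominating_neq0 e S : 0 < #|T| -> dominating e S -> S != set0.
Proof.
case/card_gt0P => x _ /forallP/(_ x); apply: contraTneq => ->.
by rewrite inE /=; apply/existsPn => y; rewrite inE.
Qed.

Lemma ocd_number_gt0 e : 0 < #|T| -> 0 < ocd_number e.
Proof.
move=> T_gt0; apply: leq_bigminn => // S /andP[domS _].
by rewrite card_gt0 (dominating_neq0 T_gt0 domS).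
Qed.

Lemma ocd_number_le1 e v : ocd e [set v] -> ocd_number e <= 1.
Proof. by rewrite -(cards1 v); apply: bigminn_le_cond. Qed.

Lemma ocd_number_gt1 e :
  1 < #|T| -> (forall v, ~~ ocd e [set v]) -> 1 < ocd_number e.
Proof.
move=> T_gt1 no_ocd1; apply: leq_bigminn => // S ocdS.
have S_gt0 : 0 < #|S|.
  by rewrite card_gt0 (dominating_neq0 (ltnW T_gt1) (andP ocdS).1).
rewrite ltn_neqAle S_gt0 andbT eq_sym; apply: contraTneq ocdS => /eqP.
by case/cards1P => v ->; apply: no_ocd1.
Qed.

Lemma not_dominating_remove_edges e F v u :
  u != v -> [set v; u] \in F -> ~~ dominating (remove_edges e F) [set v].
Proof.
move=> uv vuF; apply/negP => /forallP/(_ u); rewrite inE uv /=.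
by case/existsP => w; rewrite inE => /andP[/eqP-> /andP[_]]; rewrite setUC vuF.
Qed.

Lemma not_outer_connected e S x y : x \notin S -> y \notin S -> x != y ->
  (forall z, ~~ outer_rel e S x z) -> ~~ outer_connected e S.
Proof.
move=> xS yS xy x_isolated; apply/negP => /forallP/(_ x)/forallP/(_ y).
rewrite xS yS /= => /connectP[[|z p] /=]; first by move=> _ yx; rewrite yx eqxx in xy.
by rewrite (negbTE (x_isolated z)).
Qed.

Lemma ocd_bondage_eq e b :
  (exists2 F, ocd_bondage_witness e F & #|F| <= b) ->
  (forall F, ocd_bondage_witness e F -> b <= #|F|) -> ocd_bondage e = b.
Proof.
move=> [F0 wF0 F0_le] lb; apply/eqP; rewrite eqn_leq.
rewrite (leq_trans (bigminn_le_cond _ _ wF0)) //=.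
apply: leq_bigminn (lb); apply: leq_trans (lb _ wF0) _.
by rewrite ltnW // ltnS subset_leq_card // (andP wF0).1.
Qed.

Lemma ocd_bondage_witness_cover e F :
  1 < #|T| -> ocd_number e <= 1 -> F \subset edges e ->
  (forall v, exists2 u, u != v & [set v; u] \in F) -> ocd_bondage_witness e F.
Proof.
move=> T_gt1 ocd_e_le1 F_sub F_covers; rewrite /ocd_bondage_witness F_sub.
apply: leq_ltn_trans ocd_e_le1 (ocd_number_gt1 T_gt1 _) => v.
by have [u uv vuF] := F_covers v; rewrite /ocd negb_and (not_dominating_remove_edges e uv vuF).
Qed.

Lemma card_edge e E : E \in edges e -> #|E| <= 2.
Proof. by case/imset2P => x y _ _ ->; rewrite cards2 ltnS leq_b1. Qed.

Lemma mem_edges e x y : e x y -> [set x; y] \in edges e.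
Proof. by move=> exy; apply/imset2P; exists x y; rewrite ?inE. Qed.

Lemma exists_uncovered F :
  {in F, forall E : {set T}, #|E| <= 2} -> 2 * #|F| < #|T| -> exists v, v \notin cover F.
Proof.
move=> F_le2 F_small.
have : #|cover F| < #|T|.
  apply: leq_ltn_trans F_small; apply: leq_trans (leq_card_cover F) _.
  by rewrite mulnC -sum_nat_const; apply: leq_sum.
rewrite -[#|T|](cardsC (cover F)) -{1}[#|cover F|]addn0 ltn_add2l.
by case/card_gt0P => v; rewrite inE; exists v.
Qed.

Definition blocked F x y : {set T} :=
  [set z | (z \notin [set x; y]) && (([set x; z] \in F) || ([set z; y] \in F))].

Lemma card_blocked F x y : [set x; y] \in F -> #|blocked F x y| < #|F|.
Proof.
move=> xyF; set B := blocked F x y.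
pose charge z := if [set x; z] \in F then [set x; z] else [set z; y].
have charge_self z : z \in charge z by rewrite /charge; case: ifP; rewrite !inE eqxx ?orbT.
have in_charge z w : w \in charge z -> [|| w == x, w == z | w == y].
  by rewrite /charge; case: ifP; rewrite !inE => _ /orP[]->; rewrite ?orbT.
have charge_inj : {in B &, injective charge}.
  move=> z1 z2; rewrite inE !in_set2 negb_or => /andP[/andP[z1x z1y] _] _ eq12.
  have := in_charge z2 z1; rewrite -eq12 charge_self (negbTE z1x) (negbTE z1y) orbF.
  by move=> /(_ isT)/eqP.
have charge_sub : charge @: B \subset F :\ [set x; y].
  apply/subsetP => E /imsetP[z]; rewrite inE => /andP[zxy zF] ->.
  rewrite !inE; apply/andP; split.
    by apply: contra zxy => /eqP <-; apply: charge_self.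
  by rewrite /charge; case: ifP => // xzF; rewrite xzF in zF.
rewrite -(card_in_imset charge_inj) (cardsD1 [set x; y] F) xyF add1n ltnS.
exact: subset_leq_card.
Qed.

Lemma exists_common_neighbour F v x y : #|F| + 3 <= #|T| -> [set x; y] \in F ->
  exists z, [&& z \notin [set v; x; y], [set x; z] \notin F & [set z; y] \notin F].
Proof.
move=> F_small xyF; apply/existsP; apply: contraTT (card_blocked xyF).
rewrite negb_exists -leqNgt => /forallP all_blocked.
have vxy_le3 : #|[set v; x; y]| <= 3.
  by rewrite (leq_trans (leq_card_setU _ _)) // cards2 cards1 addn1 !ltnS leq_b1.
have : ~: [set v; x; y] \subset blocked F x y.
  apply/subsetP => z; rewrite in_setC => z_new; move: (all_blocked z).
  rewrite z_new /= negb_and !negbK => zF; rewrite inE zF andbT.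
  by apply: contra z_new; rewrite !inE => /orP[]->; rewrite ?orbT.
move/subset_leq_card; have := cardsC [set v; x; y]; lia.
Qed.

Lemma ocd1_of_sparse_complement f F v :
  (forall x y, x != y -> [set x; y] \notin F -> f x y) ->
  #|F| + 3 <= #|T| -> v \notin cover F -> ocd f [set v].
Proof.
move=> f_dense F_small v_free.
have vxF x : [set v; x] \notin F.
  by apply: contra v_free => vxF; apply/bigcupP; exists [set v; x]; rewrite // !inE eqxx.
have step a b : a != v -> b != v -> a != b -> [set a; b] \notin F ->
    outer_rel f [set v] a b.
  by move=> av bv ab abF; apply/and3P; split; rewrite ?inE ?f_dense.
apply/andP; split.
  apply/forallP => x; apply/implyP; rewrite inE => xv.
  by apply/existsP; exists v; rewrite inE eqxx f_dense // setUC vxF.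
apply/forallP => x; apply/forallP => y; apply/implyP; rewrite !inE => /andP[xv yv].
have [->|xy] := eqVneq x y; first exact: connect0.
have [xyF|xyF] := boolP ([set x; y] \in F); last exact/connect1/step.
have [z /and3P[]] := exists_common_neighbour v F_small xyF.
rewrite !inE !negb_or => /andP[/andP[zv zx] zy] xzF zyF.
by apply: (connect_trans (y := z)); apply: connect1; apply: step; rewrite // eq_sym.
Qed.

Section Complete.
Variable e : rel T.
Hypothesis e_complete : forall x y, x != y -> e x y.

Lemma ocd_number_complete_le1 : 3 <= #|T| -> ocd_number e <= 1.
Proof.
move=> T_ge3; have [v _] := card_gt0P (ltnW (ltnW T_ge3)).
apply: (@ocd_number_le1 _ v); apply: (@ocd1_of_sparse_complement _ set0).
- by move=> x y /e_complete.
- by rewrite cards0.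
- by rewrite /cover big_set0 inE.
Qed.

Lemma ocd_bondage_witness_large F :
  ocd_bondage_witness e F -> 2 * #|F| < #|T| -> #|T| < #|F| + 3.
Proof.
case/andP => F_sub ocd_lt F_small; rewrite ltnNge; apply/negP => F_small'.
have [v v_free] : exists v, v \notin cover F.
  by apply: exists_uncovered F_small => E /(subsetP F_sub); apply: card_edge.
have ocd_e_gt0 := ocd_number_gt0 e (leq_ltn_trans (leq0n _) F_small).
have : ocd_number (remove_edges e F) <= 1.
  apply: (@ocd_number_le1 _ v); apply: ocd1_of_sparse_complement F_small' v_free.
  by move=> x y xy xyF; rewrite /remove_edges /= e_complete.
lia.
Qed.

End Complete.
End OuterConnectedDomination.

(* For odd n.+1 the last pair is {n, 0}, since out-of-range [inord] gives 0. *)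
Definition pairing n : {set {set 'I_n.+1}} :=
  [set [set inord (2 * i); inord (2 * i).+1] | i : 'I_(n.+2 %/ 2)].

Lemma card_pairing n : #|pairing n| <= n.+2 %/ 2.
Proof. by rewrite (leq_trans (leq_imset_card _ _)) ?card_ord. Qed.

Lemma inord_pair_neq n i : 0 < n -> i < n.+2 %/ 2 ->
  inord (2 * i) != inord (2 * i).+1 :> 'I_n.+1.
Proof.
move=> n_gt0 i_lt; apply/eqP => /(congr1 val).
by rewrite /inord !val_insubd /=; case: ifP; case: ifP; lia.
Qed.

Lemma pairing_sub n : 0 < n -> pairing n \subset edges (complete_graph n.+1).
Proof.
move=> n_gt0; apply/subsetP => _ /imsetP[i _ ->].
exact/mem_edges/inord_pair_neq.
Qed.

Lemma pairing_cover n (v : 'I_n.+1) :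
  0 < n -> exists2 u, u != v & [set v; u] \in pairing n.
Proof.
move=> n_gt0; have v_le := ltn_ord v.
have i_lt : v %/ 2 < n.+2 %/ 2 by lia.
have pair_neq := inord_pair_neq n_gt0 i_lt.
have pair_in : [set inord (2 * (v %/ 2)); inord (2 * (v %/ 2)).+1] \in pairing n.
  by apply/imsetP; exists (Ordinal i_lt).
have [v_even|v_odd] := eqVneq (v %% 2) 0.
  have -> : v = inord (2 * (v %/ 2)) by apply: val_inj; rewrite /= inordK; lia.
  by exists (inord (2 * (v %/ 2)).+1); rewrite // eq_sym.
have -> : v = inord (2 * (v %/ 2)).+1 by apply: val_inj; rewrite /= inordK; lia.
by exists (inord (2 * (v %/ 2))); rewrite // setUC.
Qed.

Lemma ocd_bondage_witness_pairing n :
  1 < n -> ocd_bondage_witness (complete_graph n.+1) (pairing n).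
Proof.
move=> n_gt1; apply: ocd_bondage_witness_cover.
- by rewrite card_ord ltnS ltnW.
- by apply: (@ocd_number_complete_le1 _ (complete_graph n.+1)) => //; rewrite card_ord.
- exact/pairing_sub/ltnW.
- by move=> v; apply/pairing_cover/ltnW.
Qed.

Lemma ocd_bondage_witness_K3 :
  ocd_bondage_witness (complete_graph 3) [set [set ord0; ord_max]].
Proof.
set F := [set _]; have acF : [set ord0; ord_max] \in F := set11 _.
rewrite /ocd_bondage_witness sub1set mem_edges //=.
apply: leq_ltn_trans (ocd_number_complete_le1 _ _) (ocd_number_gt1 _ _);
  rewrite ?card_ord // => v; rewrite /ocd negb_and.
have [->|va] := eqVneq v ord0; first by rewrite (not_dominating_remove_edges _ _ acF).
have [->|vc] := eqVneq v ord_max.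
  by rewrite (@not_dominating_remove_edges _ _ _ _ ord0) // setUC.
apply/orP; right; apply: (@not_outer_connected _ _ _ ord0 ord_max) => //.
- by rewrite inE eq_sym.
- by rewrite inE eq_sym.
move=> z; apply/negP => /and3P[/andP[/= az aczF] _]; rewrite inE; apply/negPn.
have [zc|zc] := eqVneq z ord_max; first by rewrite zc acF in aczF.
move: va vc az zc (ltn_ord v) (ltn_ord z).
rewrite /complete_graph /= negbK -!(inj_eq val_inj) /=; lia.
Qed.

Theorem mainTheorem8 (n : nat) (hn : 3 <= n) :
  ocd_bondage (complete_graph n) = (if n == 3 then 1 else (n + 1) %/ 2).
Proof.
have large F : ocd_bondage_witness (complete_graph n) F -> 2 * #|F| < n -> n < #|F| + 3.
  by move/(ocd_bondage_witness_large (fun _ _ xy => xy)); rewrite card_ord.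
apply: ocd_bondage_eq; last by move=> F /large; case: eqP; lia.
case: eqP => [n3|n_neq3].
  by subst n; exists [set [set ord0; ord_max]]; rewrite ?cards1 ?ocd_bondage_witness_K3.
case: n hn n_neq3 {large} => [//|m] hm _.
by exists (pairing m); rewrite ?ocd_bondage_witness_pairing ?addn1 ?card_pairing.
Qed.
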